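(* Let $I\in\mathcal I$ and let $(c_m)_m$ be a sequence in $N$. Then there exist a subsequence $(c_k)_k$ and elements $\gamma_k\in\Gamma_I$, $b_k\in N$ such that $c_k=\gamma_k b_k$ for every $k$ and the sequence $(b_k)$ converges to an element $b\in N$ (in the topology of $N\subset T^d$).
   Context: Let $\mathfrak d$ be an $n$-dimensional real vector space. A quasilattice in $\mathfrak d$ is the $\mathbb Z$-submodule generated by a finite set of vectors spanning $\mathfrak d$. Let $\Delta\subset\mathfrak d^*$ be an $n$-dimensional convex polytope with $d$ facets, $\Delta=\bigcap_{j=1}^d\{\mu:\langle\mu,X_j\rangle\ge\lambda_j\}$, with chosen inward normals $X_1,\dots,X_d\in\mathfrak d$, and let $Q$ be a quasilattice containing the $X_j$. For each face $F$ let $I_F=\{j:\langle\mu,X_j\rangle=\lambda_j \text{ on } F\}$. Let $\pi:\mathbb R^d\to\mathfrak d$, $e_j\mapsto X_j$; $T^d=\mathbb R^d/\mathbb Z^d$ with projection $\exp$; $N=\ker(T^d\to\mathfrak d/Q)$ (induced by $\pi$). For $J\subseteq\{1,\dots,d\}$, $T^J=\exp(\mathbb R^J)$ where $\mathbb R^J$ is spanned by $e_j$, $j\in J$. $\mathcal I$ is the set of subsets $I$ such that $\{X_j:j\in I\}$ is a basis of $\mathfrak d$ and $I\subseteq I_\mu$ for some vertex $\mu$ of $\Delta$; $\Gamma_I=N\cap T^I$. *)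

From Stdlib Require Import Reals ZArith.
Open Scope R_scope.

(* Vectors of R^k are represented as functions nat -> R; only the
   coordinates 0..k-1 are meaningful. *)

Fixpoint rsum (k : nat) (f : nat -> R) : R :=
  match k with
  | O => 0
  | S k' => rsum k' f + f k'
  end.

(* pairing <mu, x> of mu in d^* with x in d = R^n *)
Definition pair (n : nat) (mu x : nat -> R) : R := rsum n (fun i => mu i * x i).

Definition in_Delta (n d : nat) (X : nat -> nat -> R) (lam : nat -> R)
  (mu : nat -> R) : Prop :=
  forall j, (j < d)%nat -> pair n mu (X j) >= lam j.

Definition is_polytope_with_facets (n d : nat) (X : nat -> nat -> R)
  (lam : nat -> R) : Prop :=
  (exists M, forall mu, in_Delta n d X lam mu -> forall i, (i < n)%nat -> Rabs (mu i) <= M)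
  (* n-dimensional: nonempty interior *)
  /\ (exists mu0, forall j, (j < d)%nat -> pair n mu0 (X j) > lam j)
  (* each inequality j defines a facet, distinct from the others: some point of
     Delta saturates exactly the j-th inequality *)
  /\ (forall j, (j < d)%nat -> exists mu, in_Delta n d X lam mu /\
        pair n mu (X j) = lam j /\
        forall k, (k < d)%nat -> k <> j -> pair n mu (X k) > lam k).

Definition is_vertex (n d : nat) (X : nat -> nat -> R) (lam : nat -> R)
  (mu : nat -> R) : Prop :=
  in_Delta n d X lam mu /\
  forall a b t, in_Delta n d X lam a -> in_Delta n d X lam b -> 0 < t < 1 ->
    (forall i, (i < n)%nat -> mu i = t * a i + (1 - t) * b i) ->
    forall i, (i < n)%nat -> a i = b i.

Definition in_Q (n m : nat) (gens : nat -> nat -> R) (v : nat -> R) : Prop :=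
  exists k : nat -> Z, forall i, (i < n)%nat ->
    v i = rsum m (fun l => IZR (k l) * gens l i).

Definition spans (n m : nat) (gens : nat -> nat -> R) : Prop :=
  forall w : nat -> R, exists a : nat -> R, forall i, (i < n)%nat ->
    w i = rsum m (fun l => a l * gens l i).

Definition piX (n d : nat) (X : nat -> nat -> R) (t : nat -> R) : nat -> R :=
  fun i => rsum d (fun j => t j * X j i).

Definition is_basis_family (n d : nat) (X : nat -> nat -> R) (I : nat -> bool) : Prop :=
  (forall a : nat -> R,
     (forall i, (i < n)%nat -> rsum d (fun j => if I j then a j * X j i else 0) = 0) ->
     forall j, (j < d)%nat -> I j = true -> a j = 0)
  /\ (forall w : nat -> R, exists a : nat -> R, forall i, (i < n)%nat ->
        w i = rsum d (fun j => if I j then a j * X j i else 0)).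

Definition in_calI (n d : nat) (X : nat -> nat -> R) (lam : nat -> R)
  (I : nat -> bool) : Prop :=
  (forall j, I j = true -> (j < d)%nat) /\
  is_basis_family n d X I /\
  exists mu, is_vertex n d X lam mu /\
    forall j, (j < d)%nat -> I j = true -> pair n mu (X j) = lam j.

(* Torus T^d = R^d / Z^d: points are given by representatives t : nat -> R. *)
Definition torus_eq (d : nat) (s t : nat -> R) : Prop :=
  exists z : nat -> Z, forall j, (j < d)%nat -> s j = t j + IZR (z j).

Definition vadd (s t : nat -> R) : nat -> R := fun j => s j + t j.

(* exp(t) in N = ker(T^d -> d/Q) *)
Definition in_N (n d m : nat) (X : nat -> nat -> R) (gens : nat -> nat -> R)
  (t : nat -> R) : Prop :=
  in_Q n m gens (piX n d X t).

(* exp(g) in T^I = exp(R^I) *)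
Definition in_TI (d : nat) (I : nat -> bool) (g : nat -> R) : Prop :=
  exists s : nat -> R, (forall j, (j < d)%nat -> I j = false -> s j = 0) /\
    torus_eq d g s.

Definition in_Gamma (n d m : nat) (X : nat -> nat -> R) (gens : nat -> nat -> R)
  (I : nat -> bool) (g : nat -> R) : Prop :=
  in_N n d m X gens g /\ in_TI d I g.

Definition torus_conv (d : nat) (b : nat -> nat -> R) (bl : nat -> R) : Prop :=
  forall eps, eps > 0 -> exists K, forall k, (k >= K)%nat ->
    exists z : nat -> Z, forall j, (j < d)%nat -> Rabs (b k j - bl j - IZR (z j)) < eps.

From Stdlib Require Import Reals ZArith Lra Lia Rtopology ClassicalEpsilon.
Open Scope R_scope.

(* Only the fact that (X_j)_{j in I} spans d is needed.  Writing
   X_l = sum_{j in I} beta_{l j} X_j, the linear map P(t)_j = [j in I] sum_l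
   t_l beta_{l j} satisfies pi o P = pi, so k = id - P projects R^d onto ker pi
   along R^I, and k(t) agrees with t off I.  Every k(t) lies in N (pi(k(t)) = 0).
   Let f_k be the fractional parts of the representatives of c_k.  Then
   c_k = (c_k - k(f_k)) + k(f_k), where c_k - k(f_k) has the same image under
   pi as c_k (so lies in N) and integer coordinates off I (so lies in T^I):
   it is in Gamma_I.  The f_k lie in the compact cube [0,1]^d, so a subsequence
   converges to some F, and by continuity of k the k(f_k) converge to k(F). *)

Definition strictly_increasing (p : nat -> nat) : Prop :=
  forall k, (p k < p (S k))%nat.

Lemma strictly_increasing_lt (p : nat -> nat) :
  strictly_increasing p -> forall i j, (i < j)%nat -> (p i < p j)%nat.
Proof.
  intros Hp i j Hij; induction Hij as [|j _ IH]; [apply Hp|].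
  specialize (Hp j); lia.
Qed.

Lemma strictly_increasing_ge (p : nat -> nat) :
  strictly_increasing p -> forall k, (k <= p k)%nat.
Proof. intros Hp k; induction k as [|k IH]; [lia|]. specialize (Hp k); lia. Qed.

Lemma strictly_increasing_comp (p q : nat -> nat) :
  strictly_increasing p -> strictly_increasing q ->
  strictly_increasing (fun k => p (q k)).
Proof. intros Hp Hq k. apply strictly_increasing_lt; [exact Hp | apply Hq]. Qed.

Definition conv_coord (d : nat) (u : nat -> nat -> R) (F : nat -> R) : Prop :=
  forall eps, eps > 0 -> exists K, forall k, (k >= K)%nat ->
    forall j, (j < d)%nat -> Rabs (u k j - F j) < eps.

(* A cluster point of a sequence is the limit of a subsequence: choose, for the
   k-th term, an index beyond the previous one within distance 1/(k+1). *)
Lemma cluster_point_subseq (u : nat -> R) (l : R) :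
  (forall e : posreal, forall N, exists p, (N <= p)%nat /\ Rabs (u p - l) < e) ->
  exists psi, strictly_increasing psi /\ Un_cv (fun k => u (psi k)) l.
Proof.
  intros Hcl.
  assert (Hnear : forall Ne : nat * nat, exists p,
            (fst Ne <= p)%nat /\ Rabs (u p - l) < / (INR (snd Ne) + 1)).
  { intros [N e].
    assert (He : 0 < / (INR e + 1)) by (apply Rinv_0_lt_compat; pose proof (pos_INR e); lra).
    exact (Hcl (mkposreal _ He) N). }
  destruct (choice _ Hnear) as [g Hg].
  set (psi := fix psi (k : nat) : nat :=
         match k with O => g (O, O) | S k' => g (S (psi k'), k) end).
  assert (Hclose : forall k, Rabs (u (psi k) - l) < / (INR k + 1)).
  { intros [|k]; [exact (proj2 (Hg (O, O))) | exact (proj2 (Hg (S (psi k), S k)))]. }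
  exists psi; split.
  - intro k. exact (proj1 (Hg (S (psi k), S k))).
  - intros eps Heps. destruct (archimed_cor1 eps Heps) as [N [HN HNpos]].
    exists N. intros k Hk. unfold R_dist.
    eapply Rlt_le_trans; [apply Hclose|].
    apply Rlt_le, Rle_lt_trans with (/ INR N); [|exact HN].
    apply Rinv_le_contravar; [apply lt_0_INR; lia|].
    apply le_INR in Hk; lra.
Qed.

Lemma interval_subseq (lo hi : R) (u : nat -> R) :
  (forall k, lo <= u k <= hi) ->
  exists psi a, strictly_increasing psi /\ Un_cv (fun k => u (psi k)) a.
Proof.
  intros Hu.
  destruct (Bolzano_Weierstrass u (fun x => lo <= x <= hi) (compact_P3 lo hi) Hu)
    as [l Hl].
  destruct (cluster_point_subseq u l) as [psi Hpsi]; [|exists psi, l; exact Hpsi].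
  intros e N. destruct (Hl (disc l e) N) as [p Hp]; [|exists p; exact Hp].
  exists e; intros y Hy; exact Hy.
Qed.

Lemma cube_subseq (d : nat) (lo hi : R) (u : nat -> nat -> R) :
  (forall k j, lo <= u k j <= hi) ->
  exists phi F, strictly_increasing phi /\ conv_coord d (fun k => u (phi k)) F.
Proof.
  intros Hu. induction d as [|d IH].
  - exists (fun k => k), (fun _ => 0). split; [intro k; lia|].
    intros eps _; exists O; intros; lia.
  - destruct IH as [phi [F [Hphi HF]]].
    destruct (interval_subseq lo hi (fun k => u (phi k) d) (fun k => Hu _ _))
      as [psi [a [Hpsi Ha]]].
    exists (fun k => phi (psi k)), (fun j => if Nat.eqb j d then a else F j).
    split; [exact (strictly_increasing_comp phi psi Hphi Hpsi)|].
    intros eps Heps. destruct (HF eps Heps) as [K1 HK1]. destruct (Ha eps Heps) as [K2 HK2].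
    exists (max K1 K2). intros k Hk j Hj.
    destruct (Nat.eqb_spec j d) as [->|Hne].
    + apply HK2; lia.
    + apply HK1; [|lia]. pose proof (strictly_increasing_ge psi Hpsi k); lia.
Qed.

Lemma rsum_ext (k : nat) (f g : nat -> R) :
  (forall i, (i < k)%nat -> f i = g i) -> rsum k f = rsum k g.
Proof.
  induction k as [|k IH]; simpl; intros H; [reflexivity|].
  rewrite IH, H by (intros; try apply H; lia). reflexivity.
Qed.

Lemma rsum_0 (k : nat) : rsum k (fun _ => 0) = 0.
Proof. induction k as [|k IH]; simpl; [|rewrite IH]; ring. Qed.

Lemma rsum_add (k : nat) (f g : nat -> R) :
  rsum k (fun i => f i + g i) = rsum k f + rsum k g.
Proof. induction k as [|k IH]; simpl; [|rewrite IH]; ring. Qed.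

Lemma rsum_sub (k : nat) (f g : nat -> R) :
  rsum k (fun i => f i - g i) = rsum k f - rsum k g.
Proof. induction k as [|k IH]; simpl; [|rewrite IH]; ring. Qed.

Lemma rsum_mull (k : nat) (c : R) (f : nat -> R) :
  rsum k (fun i => c * f i) = c * rsum k f.
Proof. induction k as [|k IH]; simpl; [|rewrite IH]; ring. Qed.

Lemma rsum_mulr (k : nat) (c : R) (f : nat -> R) :
  rsum k (fun i => f i * c) = rsum k f * c.
Proof. induction k as [|k IH]; simpl; [|rewrite IH]; ring. Qed.

Lemma rsum_swap (a b : nat) (F : nat -> nat -> R) :
  rsum a (fun x => rsum b (fun y => F x y)) = rsum b (fun y => rsum a (fun x => F x y)).
Proof.
  induction a as [|a IH]; simpl; [symmetry; apply rsum_0|].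
  rewrite IH, <- rsum_add; reflexivity.
Qed.

Lemma rsum_abs (k : nat) (f : nat -> R) :
  Rabs (rsum k f) <= rsum k (fun i => Rabs (f i)).
Proof.
  induction k as [|k IH]; simpl; [rewrite Rabs_R0; lra|].
  eapply Rle_trans; [apply Rabs_triang | lra].
Qed.

Lemma rsum_le (k : nat) (f g : nat -> R) :
  (forall i, (i < k)%nat -> f i <= g i) -> rsum k f <= rsum k g.
Proof.
  induction k as [|k IH]; simpl; intros H; [lra|].
  pose proof (H k ltac:(lia)). pose proof (IH ltac:(intros; apply H; lia)). lra.
Qed.

Lemma rsum_nonneg (k : nat) (f : nat -> R) :
  (forall i, (i < k)%nat -> 0 <= f i) -> 0 <= rsum k f.
Proof. intros H. rewrite <- (rsum_0 k). apply rsum_le; exact H. Qed.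

Lemma rsum_term (k : nat) (f : nat -> R) (j : nat) :
  (forall i, (i < k)%nat -> 0 <= f i) -> (j < k)%nat -> f j <= rsum k f.
Proof.
  induction k as [|k IH]; simpl; intros H Hj; [lia|].
  destruct (Nat.eq_dec j k) as [->|Hne].
  - pose proof (rsum_nonneg k f ltac:(intros; apply H; lia)). lra.
  - pose proof (IH ltac:(intros; apply H; lia) ltac:(lia)). pose proof (H k ltac:(lia)). lra.
Qed.

Definition lin_map (p : nat) (A : nat -> nat -> R) (f : nat -> R) : nat -> R :=
  fun j => rsum p (fun l => f l * A l j).

Lemma conv_coord_sub (d : nat) (u v : nat -> nat -> R) (F G : nat -> R) :
  conv_coord d u F -> conv_coord d v G ->
  conv_coord d (fun k j => u k j - v k j) (fun j => F j - G j).
Proof.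
  intros Hu Hv eps Heps.
  destruct (Hu (eps / 2) ltac:(lra)) as [K1 HK1]. destruct (Hv (eps / 2) ltac:(lra)) as [K2 HK2].
  exists (max K1 K2). intros k Hk j Hj.
  pose proof (HK1 k ltac:(lia) j Hj). pose proof (HK2 k ltac:(lia) j Hj).
  replace (u k j - v k j - (F j - G j)) with ((u k j - F j) - (v k j - G j)) by ring.
  eapply Rle_lt_trans; [apply Rabs_triang|]. rewrite Rabs_Ropp. lra.
Qed.

(* Linear maps between finite-dimensional spaces are uniformly continuous:
   each output coordinate moves by at most eps' times M, the sum of |A l j|. *)
Lemma conv_coord_lin (p q : nat) (A : nat -> nat -> R) (u : nat -> nat -> R) (F : nat -> R) :
  conv_coord p u F ->
  conv_coord q (fun k => lin_map p A (u k)) (lin_map p A F).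
Proof.
  intros Hu eps Heps.
  set (M := rsum q (fun j => rsum p (fun l => Rabs (A l j)))).
  assert (HM : 0 <= M) by (apply rsum_nonneg; intros; apply rsum_nonneg; intros; apply Rabs_pos).
  set (e := eps / (1 + M)).
  assert (He : e > 0) by (apply Rdiv_lt_0_compat; lra).
  destruct (Hu e He) as [K HK]. exists K. intros k Hk j Hj.
  unfold lin_map. rewrite <- rsum_sub.
  rewrite (rsum_ext p _ (fun l => (u k l - F l) * A l j)) by (intros; ring).
  eapply Rle_lt_trans; [apply rsum_abs|].
  apply Rle_lt_trans with (e * M).
  - apply Rle_trans with (rsum p (fun l => e * Rabs (A l j))).
    + apply rsum_le; intros l Hl. rewrite Rabs_mult.
      apply Rmult_le_compat_r; [apply Rabs_pos | apply Rlt_le, HK; assumption].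
    + rewrite rsum_mull. apply Rmult_le_compat_l; [lra|].
      apply (rsum_term q (fun j0 => rsum p (fun l => Rabs (A l j0)))); [|exact Hj].
      intros; apply rsum_nonneg; intros; apply Rabs_pos.
  - apply Rlt_le_trans with (e * (1 + M)); [apply Rmult_lt_compat_l; lra|].
    right; unfold e; field; lra.
Qed.

Section KernelProjection.

Variables (n d : nat) (X : nat -> nat -> R) (I : nat -> bool) (beta : nat -> nat -> R).

Hypothesis X_in_span_I : forall l i, (l < d)%nat -> (i < n)%nat ->
  X l i = rsum d (fun j => if I j then beta l j * X j i else 0).

(* P sends t to the I-coordinates of pi(t) in the family (X_j)_{j in I}. *)
Definition proj_I : nat -> nat -> R := fun l j => if I j then beta l j else 0.

Definition ker_part (t : nat -> R) : nat -> R :=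
  fun l => t l - lin_map d proj_I t l.

Lemma piX_proj_I (t : nat -> R) (i : nat) : (i < n)%nat ->
  piX n d X (lin_map d proj_I t) i = piX n d X t i.
Proof.
  intros Hi. unfold piX, lin_map, proj_I.
  rewrite (rsum_ext d _ (fun j => rsum d (fun l => t l * (if I j then beta l j * X j i else 0))))
    by (intros j _; rewrite <- rsum_mulr; apply rsum_ext; intros; destruct (I j); ring).
  rewrite rsum_swap. apply rsum_ext; intros l Hl.
  rewrite rsum_mull, (X_in_span_I l i Hl Hi). reflexivity.
Qed.

Lemma piX_ker_part (t : nat -> R) (i : nat) : (i < n)%nat ->
  piX n d X (ker_part t) i = 0.
Proof.
  intros Hi. unfold piX, ker_part.
  rewrite (rsum_ext d _ (fun l => t l * X l i - lin_map d proj_I t l * X l i))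
    by (intros; ring).
  rewrite rsum_sub. fold (piX n d X t i) (piX n d X (lin_map d proj_I t) i).
  rewrite piX_proj_I by exact Hi. ring.
Qed.

Lemma ker_part_off_I (t : nat -> R) (l : nat) : I l = false -> ker_part t l = t l.
Proof.
  intros Hl. unfold ker_part, lin_map, proj_I. rewrite Hl.
  rewrite (rsum_ext d _ (fun _ => 0)) by (intros; ring). rewrite rsum_0. ring.
Qed.

Lemma conv_coord_ker_part (u : nat -> nat -> R) (F : nat -> R) :
  conv_coord d u F -> conv_coord d (fun k => ker_part (u k)) (ker_part F).
Proof. intros Hu. exact (conv_coord_sub d _ _ _ _ Hu (conv_coord_lin d d proj_I u F Hu)). Qed.

End KernelProjection.

Lemma in_N_of_ker (n d m : nat) (X gens : nat -> nat -> R) (t : nat -> R) :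
  (forall i, (i < n)%nat -> piX n d X t i = 0) -> in_N n d m X gens t.
Proof.
  intros Ht. exists (fun _ => 0%Z). intros i Hi. rewrite Ht by exact Hi.
  rewrite (rsum_ext m _ (fun _ => 0)) by (intros; simpl; ring). symmetry; apply rsum_0.
Qed.

Lemma piX_sub (n d : nat) (X : nat -> nat -> R) (s t : nat -> R) (i : nat) :
  piX n d X (fun l => s l - t l) i = piX n d X s i - piX n d X t i.
Proof. unfold piX. rewrite <- rsum_sub. apply rsum_ext; intros; ring. Qed.

Lemma in_N_sub_ker (n d m : nat) (X gens : nat -> nat -> R) (c t : nat -> R) :
  in_N n d m X gens c -> (forall i, (i < n)%nat -> piX n d X t i = 0) ->
  in_N n d m X gens (fun l => c l - t l).
Proof.
  intros [z Hz] Ht. exists z. intros i Hi.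
  rewrite piX_sub, Ht, Hz by exact Hi. ring.
Qed.

Lemma in_TI_of_integral_off_I (d : nat) (I : nat -> bool) (g : nat -> R) (z : nat -> Z) :
  (forall j, (j < d)%nat -> I j = false -> g j = IZR (z j)) -> in_TI d I g.
Proof.
  intros Hz. exists (fun j => if I j then g j else 0). split.
  - intros j _ Hj. rewrite Hj. reflexivity.
  - exists (fun j => if I j then 0%Z else z j). intros j Hj.
    destruct (I j) eqn:Ej; simpl; [ring|]. rewrite (Hz j Hj Ej). ring.
Qed.

Lemma torus_eq_of_eq (d : nat) (s t : nat -> R) :
  (forall j, (j < d)%nat -> s j = t j) -> torus_eq d s t.
Proof. intros H. exists (fun _ => 0%Z). intros j Hj. rewrite H by exact Hj. simpl; ring. Qed.

Lemma torus_conv_of_conv_coord (d : nat) (u : nat -> nat -> R) (F : nat -> R) :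
  conv_coord d u F -> torus_conv d u F.
Proof.
  intros Hu eps Heps. destruct (Hu eps Heps) as [K HK]. exists K. intros k Hk.
  exists (fun _ => 0%Z). intros j Hj. simpl. rewrite Rminus_0_r. exact (HK k Hk j Hj).
Qed.

Theorem mainTheorem2
  (n d m : nat) (X : nat -> nat -> R) (lam : nat -> R) (gens : nat -> nat -> R)
  (hDelta : is_polytope_with_facets n d X lam)
  (hQspan : spans n m gens)
  (hXQ : forall j, (j < d)%nat -> in_Q n m gens (X j))
  (I : nat -> bool) (hI : in_calI n d X lam I)
  (c : nat -> nat -> R) (hc : forall k, in_N n d m X gens (c k)) :
  exists (phi : nat -> nat) (gam b : nat -> nat -> R) (bl : nat -> R),
    (forall k, (phi k < phi (S k))%nat) /\
    (forall k, in_Gamma n d m X gens I (gam k)) /\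
    (forall k, in_N n d m X gens (b k)) /\
    (forall k, torus_eq d (c (phi k)) (vadd (gam k) (b k))) /\
    in_N n d m X gens bl /\
    torus_conv d b bl.
Proof.
  destruct hI as [_ [[_ I_spans] _]].
  destruct (choice _ (fun l => I_spans (X l))) as [beta Hbeta].
  assert (Hspan : forall l i, (l < d)%nat -> (i < n)%nat ->
            X l i = rsum d (fun j => if I j then beta l j * X j i else 0))
    by (intros l i _ Hi; exact (Hbeta l i Hi)).
  set (kp := ker_part d I beta).
  set (fr := fun k l => frac_part (c k l)).
  destruct (cube_subseq d 0 1 fr) as [phi [F [Hphi HF]]].
  { intros k j. pose proof (base_fp (c k j)). unfold fr; lra. }
  exists phi, (fun k l => c (phi k) l - kp (fr (phi k)) l), (fun k => kp (fr (phi k))), (kp F).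
  split; [exact Hphi|]. split; [|split; [|split; [|split]]].
  - intro k. split.
    + exact (in_N_sub_ker _ _ _ _ _ _ _ (hc (phi k)) (piX_ker_part n d X I beta Hspan _)).
    + apply (in_TI_of_integral_off_I d I _ (fun l => Int_part (c (phi k) l))).
      intros j _ Hj. unfold kp. rewrite ker_part_off_I by exact Hj.
      unfold fr, frac_part. ring.
  - intro k. exact (in_N_of_ker _ _ _ _ _ _ (piX_ker_part n d X I beta Hspan _)).
  - intro k. apply torus_eq_of_eq. intros j _. unfold vadd. ring.
  - exact (in_N_of_ker _ _ _ _ _ _ (piX_ker_part n d X I beta Hspan _)).
  - exact (torus_conv_of_conv_coord d _ _ (conv_coord_ker_part d I beta _ _ HF)).
Qed.
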